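(* Let $F=f+p$ where $f:\mathbb{R}^n\to\mathbb{R}$ is convex and continuously differentiable with Lipschitz continuous gradient and $p:\mathbb{R}^n\to\mathbb{R}$ is convex. Let $\sigma>0$ and for each $k\ge0$ let $H_k=\sigma\mathbf I-u_ku_k^t$ with $\|u_k\|^2<\sigma$. Let $\{y^k\}$ be an arbitrary sequence in $\mathbb{R}^n$, let $\{\alpha^k\}$ satisfy $\alpha^k\in(0,1)$ and $\sum_{k=0}^\infty\alpha^k=\infty$, and let $\lambda^0=1$. For each $k$ let $$M_{H_k}(x,y^k)=f(y^k)+\langle\nabla f(y^k),x-y^k\rangle+\tfrac12(x-y^k)^tH_k(x-y^k)+p(x),$$ $x^\ast_{H_k}(y^k)=\arg\min_xM_{H_k}(x,y^k)$, $g^k=H_k(y^k-x^\ast_{H_k}(y^k))$, and assume $F(x^\ast_{H_k}(y^k))\le M_{H_k}(x^\ast_{H_k}(y^k),y^k)$ for all $k$. Let $\phi^0:\mathbb{R}^n\to\mathbb{R}$ be any function and define $$\lambda^{k+1}=(1-\alpha^k)\lambda^k,\qquad \phi^{k+1}(x)=(1-\alpha^k)\phi^k(x)+\alpha^k\Big[F(x^\ast_{H_k}(y^k))+\langle g^k,x-y^k\rangle+\tfrac{1}{2\sigma}\|g^k\|^2\Big].$$ Then $(\{\phi^k\},\{\lambda^k\})$ is an estimate sequence of $F$.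
   Context: A pair of sequences $\{\phi^k(x)\}$ and $\{\lambda^k\}$ with $\lambda^k\ge0$ is called an estimate sequence of a function $F$ if $\lambda^k\to0$ and for every $x\in\mathbb{R}^n$ and all $k\ge0$, $\phi^k(x)\le(1-\lambda^k)F(x)+\lambda^k\phi^0(x)$. *)

(* Vectors of R^n are row vectors 'rV[R]_n. *)
From HB Require Import structures.
From mathcomp Require Import all_boot all_order all_algebra.
From mathcomp Require Import all_classical all_reals all_analysis.
Set Implicit Arguments. Unset Strict Implicit. Unset Printing Implicit Defensive.
Import Order.TTheory GRing.Theory Num.Theory.
Import numFieldNormedType.Exports.
Local Open Scope classical_set_scope.
Local Open Scope ring_scope.

Section Defs.
Variables (R : realType) (n : nat).

Definition dotv (u v : 'rV[R]_n) : R := \sum_(i < n) u 0 i * v 0 i.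

Definition sqnorm (v : 'rV[R]_n) : R := dotv v v.

Definition enorm (v : 'rV[R]_n) : R := Num.sqrt (sqnorm v).

Definition convex_fun (f : 'rV[R]_n -> R) : Prop :=
  forall (x y : 'rV[R]_n) (t : R), 0 <= t -> t <= 1 ->
    f (t *: x + (1 - t) *: y) <= t * f x + (1 - t) * f y.

Definition gradient (f : 'rV[R]_n -> R) (x : 'rV[R]_n) : 'rV[R]_n :=
  \row_(i < n) ('d f x (delta_mx 0 i : 'rV[R]_n)).

Definition quadf (H : 'M[R]_n) (d : 'rV[R]_n) : R := (d *m H *m d^T) 0 0.

Definition Hmat (sigma : R) (u : 'rV[R]_n) : 'M[R]_n :=
  sigma%:M - u^T *m u.

Definition model (f p : 'rV[R]_n -> R) (H : 'M[R]_n) (x y : 'rV[R]_n) : R :=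
  f y + dotv (gradient f y) (x - y) + 2^-1 * quadf H (x - y) + p x.

Fixpoint lam (alpha : nat -> R) (k : nat) : R :=
  match k with
  | O => 1
  | S k' => (1 - alpha k') * lam alpha k'
  end.

Fixpoint phiseq (phi0 : 'rV[R]_n -> R) (F : 'rV[R]_n -> R) (sigma : R)
  (alpha : nat -> R) (y xs g : nat -> 'rV[R]_n) (k : nat) (x : 'rV[R]_n) : R :=
  match k with
  | O => phi0 x
  | S k' => (1 - alpha k') * phiseq phi0 F sigma alpha y xs g k' x
            + alpha k' * (F (xs k') + dotv (g k') (x - y k')
                          + (2 * sigma)^-1 * sqnorm (g k'))
  end.

Definition estimate_sequence (F : 'rV[R]_n -> R)
  (phi : nat -> 'rV[R]_n -> R) (lambda : nat -> R) : Prop :=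
  (forall k, 0 <= lambda k) /\
  (lambda @ \oo --> (0 : R)) /\
  (forall (x : 'rV[R]_n) (k : nat),
      phi k x <= (1 - lambda k) * F x + lambda k * phi 0%N x).

End Defs.

(* Write [F = f + p], [xs] for the minimizer of the model and [g = H (y - xs)].
   Convexity of [f] gives [f x >= f y + <grad f y, x - y>], and the optimality of
   [xs] for the model, tested along the segment from [xs] to [x], gives the
   first-order inequality [p x - p xs >= <grad f y + H (xs - y), xs - x>].
   Combined with [F xs <= M_H(xs, y)] these yield
   [F x >= F xs + <g, x - y> + 1/2 (xs - y)^t H (xs - y)], and [H <= sigma I]
   bounds the last term from below by [||g||^2 / (2 sigma)].  Hence every
   function averaged into [phi^(k+1)] is a minorant of [F], and induction on [k]
   gives [phi^k <= (1 - lambda^k) F + lambda^k phi^0].  Finally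
   [lambda^k <= exp (- sum_(i < k) alpha^i)], which tends to [0]. *)
From HB Require Import structures.
From mathcomp Require Import all_boot all_order all_algebra.
From mathcomp Require Import all_classical all_reals all_analysis.
From mathcomp Require Import ring lra.
Import Order.TTheory GRing.Theory Num.Theory.
Import numFieldNormedType.Exports.
Local Open Scope classical_set_scope.
Local Open Scope ring_scope.

Section InnerProduct.
Context {R : realType} {n : nat}.
Implicit Types (a b c : 'rV[R]_n) (H : 'M[R]_n).

Lemma dotvE a b : dotv a b = (a *m b^T) 0 0.
Proof. by rewrite /dotv mxE; apply: eq_bigr => i _; rewrite mxE. Qed.

Lemma dotvC a b : dotv a b = dotv b a.
Proof. by apply: eq_bigr => i _; rewrite mulrC. Qed.

Lemma dotvDr a b c : dotv a (b + c) = dotv a b + dotv a c.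
Proof. by rewrite /dotv -big_split; apply: eq_bigr => i _; rewrite mxE mulrDr. Qed.

Lemma dotvDl a b c : dotv (b + c) a = dotv b a + dotv c a.
Proof. by rewrite dotvC dotvDr !(dotvC a). Qed.

Lemma dotvZr t a b : dotv a (t *: b) = t * dotv a b.
Proof. by rewrite /dotv mulr_sumr; apply: eq_bigr => i _; rewrite mxE mulrCA. Qed.

Lemma dotvZl t a b : dotv (t *: b) a = t * dotv b a.
Proof. by rewrite dotvC dotvZr dotvC. Qed.

Lemma dotvNr a b : dotv a (- b) = - dotv a b.
Proof. by rewrite -scaleN1r dotvZr mulN1r. Qed.

Lemma dotvNl a b : dotv (- b) a = - dotv b a.
Proof. by rewrite dotvC dotvNr dotvC. Qed.

Lemma dotvBr a b c : dotv a (b - c) = dotv a b - dotv a c.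
Proof. by rewrite dotvDr dotvNr. Qed.

Lemma dotvBl a b c : dotv (b - c) a = dotv b a - dotv c a.
Proof. by rewrite dotvDl dotvNl. Qed.

Lemma sqnormN a : sqnorm (- a) = sqnorm a.
Proof. by rewrite /sqnorm dotvNl dotvNr opprK. Qed.

Lemma quadf_dotv H a : quadf H a = dotv (a *m H) a.
Proof. by rewrite /quadf dotvE. Qed.

Lemma dotv_mulmx_sym H a b : H^T = H -> dotv (a *m H) b = dotv (b *m H) a.
Proof.
move=> symH; rewrite !dotvE.
have -> : (a *m H *m b^T) 0 0 = ((a *m H *m b^T)^T) 0 0 by rewrite [RHS]mxE.
by rewrite !trmx_mul trmxK symH mulmxA.
Qed.

End InnerProduct.

Section Hmat.
Context {R : realType} {n : nat} (sigma : R) (u : 'rV[R]_n).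

Lemma Hmat_sym : (Hmat sigma u)^T = Hmat sigma u.
Proof. by rewrite /Hmat linearB /= tr_scalar_mx trmx_mul trmxK. Qed.

Lemma mulmx_Hmat a : a *m Hmat sigma u = sigma *: a - dotv a u *: u.
Proof.
rewrite /Hmat mulmxBr mul_mx_scalar mulmxA [a *m u^T]mx11_scalar mul_scalar_mx.
by rewrite -dotvE.
Qed.

(* [H^2 <= sigma H] because [0 <= H <= sigma I]. *)
Lemma sqnorm_mulmx_Hmat_le d : 0 < sigma -> sqnorm u < sigma ->
  (2 * sigma)^-1 * sqnorm (d *m Hmat sigma u) <= 2^-1 * quadf (Hmat sigma u) d.
Proof.
rewrite /sqnorm => sigma_gt0 u_lt; rewrite quadf_dotv !mulmx_Hmat.
rewrite !dotvBl !dotvBr !dotvZl !dotvZr (dotvC u d).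
set c := dotv d u; set dd := dotv d d; set uu := dotv u u in u_lt *.
have -> : (2 * sigma)^-1 * (sigma * (sigma * dd) - sigma * (c * c)
                            - (c * (sigma * c) - c * (c * uu)))
    = 2^-1 * (sigma * dd - c * c) - 2^-1 * (c * c) * ((sigma - uu) / sigma).
  by field; lra.
suff : 0 <= 2^-1 * (c * c) * ((sigma - uu) / sigma) by lra.
apply: mulr_ge0; first nra.
by rewrite divr_ge0 //; lra.
Qed.

End Hmat.

Section Gradient.
Context {R : realType} {n : nat} (f : 'rV[R]_n -> R).

Lemma diff_dotv_gradient y v : 'd f y v = dotv (gradient f y) v.
Proof.
rewrite {1}(row_sum_delta v) linear_sum /dotv; apply: eq_bigr => i _.
by rewrite linearZ /= mxE mulrC.
Qed.

Lemma convex_fun_tangent_le x y :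
  convex_fun f -> differentiable f y ->
  f y + dotv (gradient f y) (x - y) <= f x.
Proof.
move=> cvx_f df; rewrite -diff_dotv_gradient -deriveE // -lerBrDl.
have right_sub : (0:R)^'+ `=>` (0:R)^'.
  by apply: within_subset => z /= z_gt0; rewrite gt_eqF.
have := cvg_trans (cvg_app _ right_sub) (@diff_derivable _ _ _ f y (x - y) df).
move=> /cvgr_to_le; apply; near=> h.
have h_gt0 : 0 < h by near: h; exact: nbhs_right_gt.
have h_lt1 : h < 1 by near: h; exact: nbhs_right_lt.
rewrite /= ler_pdivrMl // addrC.
have := cvx_f x y h (ltW h_gt0) (ltW h_lt1).
rewrite scalerBr scalerBl scale1r addrCA addrC mulrBr; lra.
Unshelve. all: by end_near.
Qed.

End Gradient.

Lemma ge0_of_linear_quadratic_ge0 {R : realType} (A B : R) :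
  (forall t, 0 < t -> t <= 1 -> 0 <= t * A + t ^+ 2 * B) -> 0 <= A.
Proof.
move=> H; rewrite leNgt; apply/negP => A_lt0.
have := H 1 ltr01 (lexx _); rewrite mul1r expr1n mul1r => AB_ge0.
have B_gt0 : 0 < B by lra.
have t0_gt0 : 0 < - A / (2 * B) by rewrite divr_gt0 ?mulr_gt0; lra.
have t0_le1 : - A / (2 * B) <= 1 by rewrite ler_pdivrMr ?mulr_gt0 //; lra.
have := H _ t0_gt0 t0_le1.
have -> : (- A / (2 * B)) ^+ 2 * B = - A / (2 * B) * (- A / 2).
  by rewrite expr2 -mulrA; congr (_ * _); field; lra.
by rewrite -mulrDr pmulr_rge0 //; lra.
Qed.

Section ModelMinimizer.
Context {R : realType} {n : nat} {f p : 'rV[R]_n -> R} {H : 'M[R]_n}.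
Context {y xs : 'rV[R]_n}.
Hypothesis xs_argmin : forall z, model f p H xs y <= model f p H z y.

Lemma model_argmin_first_order x : convex_fun p -> H^T = H ->
  0 <= dotv (gradient f y + (xs - y) *m H) (x - xs) + p x - p xs.
Proof.
move=> cvx_p symH; rewrite dotvDl.
apply: (ge0_of_linear_quadratic_ge0 _ (2^-1 * quadf H (x - xs))) => t t_gt0 t_le1.
have segmentE : t *: x + (1 - t) *: xs - y = (xs - y) + t *: (x - xs).
  by apply/rowP => i; rewrite !mxE; ring.
have := xs_argmin (t *: x + (1 - t) *: xs); rewrite /model segmentE.
have := cvx_p x xs t (ltW t_gt0) t_le1.
move: (x - xs) (xs - y) => e d.
rewrite !quadf_dotv mulmxDl -scalemxAl !dotvDl !dotvDr !dotvZl !dotvZr.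
rewrite (dotv_mulmx_sym _ e d symH) => p_convex model_min; nra.
Qed.

Lemma model_argmin_lower_bound x : convex_fun f -> differentiable f y ->
    convex_fun p -> H^T = H -> f xs + p xs <= model f p H xs y ->
  f xs + p xs + dotv ((y - xs) *m H) (x - y) + 2^-1 * quadf H (xs - y)
    <= f x + p x.
Proof.
move=> cvx_f df cvx_p symH F_le_model.
have first_order := model_argmin_first_order x cvx_p symH.
have tangent := convex_fun_tangent_le f x y cvx_f df.
move: first_order tangent F_le_model.
have -> : x - y = (x - xs) + (xs - y) by rewrite addrA subrK.
rewrite -[y - xs]opprB mulNmx /model quadf_dotv.
move: (x - xs) (xs - y) => e d.
rewrite !dotvDl !dotvDr !dotvNl; lra.
Qed.

End ModelMinimizer.

Lemma Hmat_model_argmin_lower_bound (R : realType) (n : nat)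
    (f p : 'rV[R]_n -> R) sigma u (y xs x : 'rV[R]_n) :
  convex_fun f -> differentiable f y -> convex_fun p ->
  0 < sigma -> sqnorm u < sigma ->
  (forall z, model f p (Hmat sigma u) xs y <= model f p (Hmat sigma u) z y) ->
  f xs + p xs <= model f p (Hmat sigma u) xs y ->
  f xs + p xs + dotv ((y - xs) *m Hmat sigma u) (x - y)
    + (2 * sigma)^-1 * sqnorm ((y - xs) *m Hmat sigma u) <= f x + p x.
Proof.
move=> cvx_f df cvx_p sigma_gt0 u_lt xs_argmin F_le_model.
have := model_argmin_lower_bound xs_argmin x cvx_f df cvx_p (Hmat_sym _ _)
  F_le_model.
have := sqnorm_mulmx_Hmat_le sigma u (xs - y) sigma_gt0 u_lt.
by rewrite -[y - xs]opprB mulNmx sqnormN; lra.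
Qed.

Section EstimateSequence.
Context {R : realType} {alpha : nat -> R}.
Hypothesis alpha_01 : forall k, 0 < alpha k < 1.

Lemma lam_ge0 k : 0 <= lam alpha k.
Proof.
elim: k => [|k IH] /=; first exact: ler01.
by have /andP[_ alpha_lt1] := alpha_01 k; rewrite mulr_ge0 // subr_ge0 ltW.
Qed.

Lemma lam_le_expR k : lam alpha k <= expR (- series alpha k).
Proof.
elim: k => [|k IH] /=; first by rewrite /series /= big_geq // oppr0 expR0.
rewrite seriesSr opprD expRD mulrC ler_pM ?lam_ge0 //.
- by have /andP[_ alpha_lt1] := alpha_01 k; rewrite subr_ge0 ltW.
- exact: expR_ge1Dx.
Qed.

Lemma lam_cvg0 : series alpha @ \oo --> +oo -> lam alpha @ \oo --> (0 : R).
Proof.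
move=> series_oo.
have series_gt0 : \forall k \near \oo, 0 < series alpha k.
  by move/cvgryPgt : series_oo; apply.
apply: (@squeeze_cvgr _ _ _ _ (fun=> 0) (fun k => (series alpha k)^-1)).
- near=> k; rewrite lam_ge0 /=.
  apply: (le_trans (lam_le_expR k)).
  have S_gt0 : 0 < series alpha k by near: k.
  rewrite expRN lef_pV2 ?posrE ?expR_gt0 //.
  by have := expR_ge1Dx (series alpha k); lra.
- exact: cvg_cst.
- exact/(gtr0_cvgV0 series_gt0).
Unshelve. all: by end_near.
Qed.

Lemma phiseq_le (n : nat) (phi0 F : 'rV[R]_n -> R) sigma (y xs g : nat -> 'rV[R]_n) :
  (forall k x, F (xs k) + dotv (g k) (x - y k) + (2 * sigma)^-1 * sqnorm (g k)
                 <= F x) ->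
  forall x k, phiseq phi0 F sigma alpha y xs g k x
                <= (1 - lam alpha k) * F x + lam alpha k * phi0 x.
Proof.
move=> minorant x; elim=> [|k IH] /=; first lra.
have /andP[alpha_gt0 alpha_lt1] := alpha_01 k.
have -> : (1 - (1 - alpha k) * lam alpha k) * F x
            + (1 - alpha k) * lam alpha k * phi0 x
    = (1 - alpha k) * ((1 - lam alpha k) * F x + lam alpha k * phi0 x)
      + alpha k * F x by ring.
apply: lerD.
- by apply: ler_wpM2l; rewrite // subr_ge0 ltW.
- by apply: ler_wpM2l; [exact: ltW | exact: minorant].
Qed.

End EstimateSequence.

Theorem lemma7 (R : realType) (n : nat) (f p : 'rV[R]_n -> R)
  (sigma : R) (u : nat -> 'rV[R]_n) (y : nat -> 'rV[R]_n)
  (alpha : nat -> R) (xs : nat -> 'rV[R]_n) (phi0 : 'rV[R]_n -> R) :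
  convex_fun f ->
  (forall x : 'rV[R]_n, differentiable f x) ->
  continuous (gradient f) ->
  (exists L : R, forall x z : 'rV[R]_n,
      enorm (gradient f x - gradient f z) <= L * enorm (x - z)) ->
  convex_fun p ->
  0 < sigma ->
  (forall k, sqnorm (u k) < sigma) ->
  (forall k, 0 < alpha k < 1) ->
  series alpha @ \oo --> +oo ->
  (* xs k = x*_{H_k}(y^k), the minimizer of M_{H_k}(., y^k) *)
  (forall k (x : 'rV[R]_n),
      model f p (Hmat sigma (u k)) (xs k) (y k)
        <= model f p (Hmat sigma (u k)) x (y k)) ->
  (forall k, f (xs k) + p (xs k)
      <= model f p (Hmat sigma (u k)) (xs k) (y k)) ->
  estimate_sequence (fun x => f x + p x)
    (phiseq phi0 (fun x => f x + p x) sigma alpha y xs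
       (fun k => (y k - xs k) *m Hmat sigma (u k)))
    (lam alpha).
Proof.
move=> cvx_f df _ _ cvx_p sigma_gt0 u_lt alpha_01 series_oo xs_argmin F_le_model.
split; first exact: lam_ge0.
split; first exact: lam_cvg0.
apply: (phiseq_le alpha_01) => k x.
exact: Hmat_model_argmin_lower_bound.
Qed.
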